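(* For every finitely supported permutation $\tau$ of $[0,1[$ and every partition $\mathcal P$ associated with $\tau$, one has $\varepsilon(\tau,\mathcal P)=\operatorname{sgn}(\tau)$.
   Context: $X=[0,1[$; $\widehat{\operatorname{PC}^{\bowtie}}$ is the group of bijections $X\to X$ continuous outside a finite subset, which contains the group ${\mathfrak S}_{\mathrm{fin}}$ of finitely supported permutations; $\operatorname{sgn}:{\mathfrak S}_{\mathrm{fin}}\to\mathbb{Z}/2\mathbb{Z}$ is the classical signature. For $h\in\widehat{\operatorname{PC}^{\bowtie}}$, a partition associated with $h$ is a finite partition $\mathcal P=\{I_1,\dots,I_n\}$ of $X$ into intervals $I_j=[\alpha_j,b_j[$ such that $h$ is continuous on the open interval $I_j^\circ=]\alpha_j,b_j[$ for each $j$ (then $h$ is strictly monotone on $I_j^\circ$ and $h(I_j^\circ)$ is an open interval). Let $\beta_j$ be the left endpoint of $h(I_j^\circ)$; the sets $\{h(\alpha_j)\}$ and $\{\beta_j\}$ coincide, and $\sigma_{(h,\mathcal P)}\in{\mathfrak S}_{\mathrm{fin}}$ sends $h(\alpha_j)$ to $\beta_j$ for each $j$ and fixes all other points. $R(h,\mathcal P)$ is the number of $j$ with $h$ decreasing on $I_j^\circ$, and $\varepsilon(h,\mathcal P)=R(h,\mathcal P)+\operatorname{sgn}(\sigma_{(h,\mathcal P)})\bmod 2$. *)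

From HB Require Import structures.
From mathcomp Require Import all_boot all_order all_algebra all_fingroup.
From mathcomp Require Import finmap.
From mathcomp Require Import all_classical all_reals all_analysis.
Set Implicit Arguments. Unset Strict Implicit. Unset Printing Implicit Defensive.
Import Order.TTheory GRing.Theory Num.Theory numFieldNormedType.Exports.
Local Open Scope classical_set_scope.
Local Open Scope ring_scope.

Section Defs.
Variable R : realType.

Definition X : set R := [set x | 0 <= x < 1].

Definition supp (f : R -> R) : set R := [set x | X x /\ f x != x].

Definition is_fin_perm (f : R -> R) : Prop :=
  [/\ (forall x, X x -> X (f x)),
      {in X &, injective f},
      (forall y, X y -> exists2 x, X x & f x = y)
    & finite_set (supp f)].

(* classical signature (in Z/2Z = bool: true = odd) of a finitely supported
   permutation f of X: the parity of the permutation of the finite set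
   supp f induced by f (false if f does not induce a permutation of it). *)
Definition fs_sign (f : R -> R) : bool :=
  let A := fset_set (supp f) in
  let g : {ffun A -> A} := [ffun x => insubd x (f (val x))] in
  (if injectiveb g as b return injectiveb g = b -> bool
   then fun H => odd_perm (Perm H) else fun _ => false) (erefl _).

(* a finite partition of X into intervals [a j, a j.+1[, j < n *)
Definition subdivision (n : nat) (a : nat -> R) : Prop :=
  [/\ a 0%N = 0, a n = 1 & forall j, (j < n)%N -> a j < a j.+1].

Definition assoc_partition (h : R -> R) (n : nat) (a : nat -> R) : Prop :=
  subdivision n a /\
  forall j, (j < n)%N -> {within `]a j, a j.+1[, continuous h}.

Definition beta (h : R -> R) (a : nat -> R) (j : nat) : R :=
  inf (h @` `]a j, a j.+1[%classic).

Definition sigmaP (h : R -> R) (n : nat) (a : nat -> R) (y : R) : R :=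
  match [pick j : 'I_n | h (a j) == y] with
  | Some j => beta h a j
  | None => y
  end.

Definition decr_on (h : R -> R) (a : nat -> R) (j : nat) : Prop :=
  forall x y, a j < x -> x < y -> y < a j.+1 -> h y < h x.

Definition Rcount (h : R -> R) (n : nat) (a : nat -> R) : nat :=
  #|[set j : 'I_n | `[< decr_on h a j >]]|.

Definition epsilon (h : R -> R) (n : nat) (a : nat -> R) : bool :=
  odd (Rcount h n a) (+) fs_sign (sigmaP h n a).

End Defs.

From HB Require Import structures.
From mathcomp Require Import all_boot all_order all_algebra all_fingroup.
From mathcomp Require Import finmap.
From mathcomp Require Import all_classical all_reals all_analysis.
From mathcomp Require Import lra.
Set Implicit Arguments. Unset Strict Implicit. Unset Printing Implicit Defensive.
Import Order.TTheory GRing.Theory Num.Theory numFieldNormedType.Exports.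
Local Open Scope classical_set_scope.
Local Open Scope ring_scope.

(* A map that is continuous on an open interval and agrees with the identity
   there outside a finite set is the identity on the whole interval.  Hence a
   finitely supported permutation tau is the identity on every open interval
   ]a_j, a_(j+1)[ of an associated partition: no interval is reversed, so
   R(tau, P) = 0, each beta_j equals a_j, and the support of tau consists of
   partition points.  Thus sigma_(tau, P) maps tau(a_j) to a_j, i.e. it is the
   inverse of tau on their common support, and inverse permutations have the
   same signature. *)

Lemma finite_set_dnbhs_notin (R : realType) (S : set R) (x : R) :
  finite_set S -> \forall y \near x^', ~ S y.
Proof.
move=> finS.
have acc : accessible_space R by apply: hausdorff_accessible; exact: Rhausdorff.
have clS : closed (S `\ x).
  by apply: (proj1 accessible_finite_set_closed acc); exact: finite_setD.
have /nbhs_dnbhs nSx : nbhs x (~` (S `\ x)).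
  by apply: open_nbhs_nbhs; split; [exact: closed_openC | move=> [_]; apply].
near=> y => Sy.
have yx : y != x by near: y; exact: nbhs_dnbhs_neq.
have : (~` (S `\ x)) y by near: y.
by apply; split => //; exact/eqP.
Unshelve. all: by end_near. Qed.

Lemma continuous_itv_id_cofinite (R : realType) (f : R -> R) (u v : R) :
  finite_set ([set x | f x != x] `&` `]u, v[) ->
  {within `]u, v[, continuous f} -> {in `]u, v[, f =1 id}.
Proof.
move=> finS ct x Ix.
have oI : open `]u, v[%classic by exact: itv_open.
move: ct; rewrite continuous_open_subspace // => ct.
have cfx : f @ x^' --> f x by apply: cvg_within_filter; apply: ct; rewrite inE.
suff cx : f @ x^' --> x by exact: cvg_unique cfx cx.
have fxE : {near x^', id =1 f}.
  near=> y; apply/esym/eqP/negP => fy.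
  have Iy : `]u, v[%classic y.
    by near: y; apply: nbhs_dnbhs; exact: open_nbhs_nbhs.
  have : ~ ([set x | f x != x] `&` `]u, v[) y.
    by near: y; exact: finite_set_dnbhs_notin.
  by apply; split => //; exact/negP.
by apply: cvg_trans (near_eq_cvg fxE) _; exact: cvg_within.
Unshelve. all: by end_near. Qed.

Section SetSign.
Variable R : realType.

Definition fset_restr (S : set R) (f : R -> R) : {ffun fset_set S -> fset_set S} :=
  [ffun x => insubd x (f (val x))].

Definition set_sign (S : set R) (f : R -> R) : bool :=
  (if injectiveb (fset_restr S f) as b return injectiveb (fset_restr S f) = b -> bool
   then fun H => odd_perm (Perm H) else fun _ => false) (erefl _).

Lemma fs_signE (f : R -> R) : fs_sign f = set_sign (supp f) f.
Proof. by []. Qed.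

Lemma set_signE (S : set R) (f : R -> R) (inj_f : injectiveb (fset_restr S f)) :
  set_sign S f = odd_perm (Perm inj_f).
Proof.
have dep_if (b : bool) (F : b = true -> bool) G (H : b = true) :
    (if b as c return b = c -> bool then F else G) (erefl b) = F H.
  by move: F G H; case: b => // F G H; rewrite (eq_irrelevance H erefl).
exact: dep_if.
Qed.

Lemma set_sign_inv (S : set R) (f g : R -> R) : finite_set S ->
  {in S, forall x, S (f x) /\ S (g x)} ->
  {in S, cancel f g} -> {in S, cancel g f} ->
  set_sign S f = set_sign S g.
Proof.
move=> finS Sfg fK gK.
have inS (x : fset_set S) : val x \in S by rewrite -in_fset_set //; exact: valP.
have valE h (x : fset_set S) : S (h (val x)) -> val (fset_restr S h x) = h (val x).
  by move=> Shx; rewrite ffunE insubdK // in_fset_set //; exact: mem_set.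
set F := fset_restr S f; set G := fset_restr S g.
have valF x : val (F x) = f (val x) by rewrite valE //; have [] := Sfg _ (inS x).
have valG x : val (G x) = g (val x) by rewrite valE //; have [] := Sfg _ (inS x).
have FK : cancel F G by move=> x; apply: val_inj; rewrite valG valF fK.
have GK : cancel G F by move=> x; apply: val_inj; rewrite valF valG gK.
have inj_F : injectiveb F by apply/injectiveP; exact: can_inj FK.
have inj_G : injectiveb G by apply/injectiveP; exact: can_inj GK.
rewrite (set_signE inj_F) (set_signE inj_G).
have -> : Perm inj_F = (Perm inj_G)^-1%g.
  apply: (mulgI (Perm inj_G)); rewrite mulgV; apply/permP => x.
  by rewrite permM perm1 -!pvalE /= GK.
exact: odd_permV.
Qed.

End SetSign.

Section Subdivision.
Variables (R : realType) (n : nat) (a : nat -> R).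
Hypothesis subdiv : subdivision n a.

Lemma subdivision_le i k : (i <= k)%N -> (k <= n)%N -> a i <= a k.
Proof.
case: subdiv => _ _ a_lt ik kn.
elim: k ik kn => [|k IHk]; first by rewrite leqn0 => /eqP->.
rewrite leq_eqVlt ltnS => /predU1P[-> //|ik] kn.
exact: le_trans (IHk ik (ltnW kn)) (ltW (a_lt k kn)).
Qed.

Lemma subdivision_X j : (j < n)%N -> X (a j).
Proof.
case: (subdiv) => a0 an a_lt jn; apply/andP; split.
  by rewrite -a0 subdivision_le // ltnW.
by rewrite -an (lt_le_trans (a_lt j jn)) // subdivision_le.
Qed.

Lemma subdivision_itv_sub j : (j < n)%N -> `]a j, a j.+1[ `<=` @X R.
Proof.
case: (subdiv) => _ an _ jn x; rewrite /= in_itv /= => /andP[ajx xaj].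
have /andP[aj0 _] := subdivision_X jn; apply/andP; split.
  exact: le_trans aj0 (ltW ajx).
by rewrite -an (lt_le_trans xaj) // subdivision_le.
Qed.

Lemma subdivision_cover x : X x -> exists2 j, (j < n)%N & a j <= x < a j.+1.
Proof.
case: subdiv => a0 an _ /andP[x0 x1].
suff: forall k, (k <= n)%N -> x < a k -> exists2 j, (j < k)%N & a j <= x < a j.+1.
  by move=> /(_ n (leqnn n)); rewrite an; apply.
elim=> [|k IHk] kn xak; first by move: xak; rewrite a0 ltNge x0.
have [akx|xak'] := leP (a k) x; first by exists k; rewrite ?akx.
by have [j jk ajx] := IHk (ltnW kn) xak'; exists j => //; exact: ltnW.
Qed.

End Subdivision.

Section FinPermPartition.
Variables (R : realType) (tau : R -> R) (n : nat) (a : nat -> R).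
Hypotheses (tau_perm : is_fin_perm tau) (tau_part : assoc_partition tau n a).

Let subdiv : subdivision n a := tau_part.1.

Lemma tau_id_itv j : (j < n)%N -> {in `]a j, a j.+1[, tau =1 id}.
Proof.
move=> jn; apply: continuous_itv_id_cofinite; last exact: tau_part.2.
case: tau_perm => _ _ _; apply: sub_finite_set => x /= [tx Ix].
by split=> //; apply: (subdivision_itv_sub subdiv jn).
Qed.

Lemma supp_tau_node x : supp tau x -> exists2 j, (j < n)%N & x = a j.
Proof.
move=> [Xx tx]; have [j jn /andP[ajx xaj]] := subdivision_cover subdiv Xx.
exists j => //; have [//|ajx'] := eqVneq x (a j).
suff : tau x = x by move/eqP: tx.
by rewrite (tau_id_itv jn) // in_itv /= xaj andbT lt_neqAle ajx eq_sym ajx'.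
Qed.

Lemma tau_not_decr j : (j < n)%N -> ~ decr_on tau a j.
Proof.
move=> jn decr; have [_ _ /(_ j jn) aj] := subdiv.
set x := (2 * a j + a j.+1) / 3; set y := (a j + 2 * a j.+1) / 3.
have ajx : a j < x by rewrite /x; lra.
have xy : x < y by rewrite /x /y; lra.
have yaj : y < a j.+1 by rewrite /y; lra.
have := decr _ _ ajx xy yaj.
rewrite !(tau_id_itv jn) ?in_itv /= ?ajx ?yaj ?(lt_trans ajx xy) ?(lt_trans xy yaj) //.
by rewrite ltNge (ltW xy).
Qed.

Lemma Rcount_eq0 : Rcount tau n a = 0%N.
Proof.
apply: eq_card0 => j; apply/negbTE/negP => /set_mem /asboolP.
exact: tau_not_decr (ltn_ord j).
Qed.

Lemma beta_node j : (j < n)%N -> beta tau a j = a j.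
Proof.
move=> jn; have [_ _ /(_ j jn) aj] := subdiv.
by rewrite /beta (eq_image_id (tau_id_itv jn)) inf_itv // bnd_simp.
Qed.

Lemma sigmaP_tau_node j : (j < n)%N -> sigmaP tau n a (tau (a j)) = a j.
Proof.
move=> jn; have [_ tau_inj _ _] := tau_perm.
rewrite /sigmaP; case: pickP => [k /eqP tak | /(_ (Ordinal jn))].
  have aX i : (i < n)%N -> a i \in @X R by move=> ?; exact/mem_set/(subdivision_X subdiv).
  by rewrite beta_node //; apply: tau_inj tak; apply: aX.
by rewrite eqxx.
Qed.

Lemma sigmaP_id y : (forall j, (j < n)%N -> tau (a j) != y) -> sigmaP tau n a y = y.
Proof.
move=> ny; rewrite /sigmaP; case: pickP => [k tak | //].
by move: (ny k (ltn_ord k)); rewrite tak.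
Qed.

Lemma supp_tau_image x :
  supp tau x -> exists2 j, (j < n)%N & x = tau (a j) /\ supp tau (a j).
Proof.
move=> [Xx tx]; have [_ _ tau_surj _] := tau_perm.
have [z Xz tz] := tau_surj x Xx.
have sz : supp tau z.
  by split => //; apply: contraNneq tx => tzz; rewrite -tz !tzz.
by have [j jn ez] := supp_tau_node sz; exists j => //; rewrite -ez.
Qed.

Lemma supp_tau_stable x : supp tau x -> supp tau (tau x).
Proof.
move=> [Xx tx]; have [tauX tau_inj _ _] := tau_perm.
split; first exact: tauX.
have Xtx : tau x \in @X R by exact/mem_set/tauX.
by apply: contraNneq tx => /(tau_inj _ _ Xtx (mem_set Xx)) ->.
Qed.

Lemma supp_sigmaP : supp (sigmaP tau n a) = supp tau.
Proof.
apply/seteqP; split => x; last first.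
  move=> sx; split; first by case: sx.
  have [j jn [-> [_ sj]]] := supp_tau_image sx.
  by rewrite sigmaP_tau_node // eq_sym.
move=> [Xx sx].
have [[j jn ej]|nj] := pselect (exists2 j, (j < n)%N & tau (a j) = x).
  rewrite -ej; apply: supp_tau_stable; split; first exact: (subdivision_X subdiv jn).
  by move: sx; rewrite -ej sigmaP_tau_node // eq_sym.
move/eqP: sx; case; apply: sigmaP_id => j jn; apply/eqP => ej; apply: nj; by exists j.
Qed.

Lemma fs_sign_sigmaP : fs_sign (sigmaP tau n a) = fs_sign tau.
Proof.
rewrite !fs_signE supp_sigmaP; apply: set_sign_inv; first by case: tau_perm.
- move=> x /set_mem sx; split; last exact: supp_tau_stable.
  by have [j jn [-> sj]] := supp_tau_image sx; rewrite sigmaP_tau_node.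
- by move=> x /set_mem /supp_tau_image [j jn [-> _]]; rewrite sigmaP_tau_node.
- by move=> x /set_mem /supp_tau_node [j jn ->]; rewrite sigmaP_tau_node.
Qed.

End FinPermPartition.

Theorem proposition3p4 (R : realType) (tau : R -> R) (n : nat) (a : nat -> R) :
  is_fin_perm tau -> assoc_partition tau n a ->
  epsilon tau n a = fs_sign tau.
Proof.
move=> tau_perm tau_part.
by rewrite /epsilon Rcount_eq0 // fs_sign_sigmaP.
Qed.
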